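(* Let $\Delta x>0$, $\Delta t>0$, let $a=(a_j)$, $b=(b_j)$ be sequences in $\ell^2_\Delta(\mathbb Z)$ (with $b$ bounded and $D_+b$ bounded) and $\sigma\in\{0,1\}$. Then $$\begin{aligned}\langle D_+D_+D_-(a),D(ab)\rangle\le{}&\frac{\Delta t}{4}\langle|D_+(b)|+|D_-(b)|,(D_+D_+D_-(a))^2\rangle+\frac{1}{4\Delta t}\langle|D_-(b)|+|D_+(b)|,a^2\rangle\\&+\frac12\Big\langle\|D_+(b)\|^\sigma_{\ell^\infty}\mathbf 1-\frac{\Delta x}{2}D_-(b),(D_+D_-(a))^2\Big\rangle+\frac12\|D_+(b)\|^{2-\sigma}_{\ell^\infty}\|D_+(a)\|^2_{\ell^2_\Delta}-\langle b,(D_+D(a))^2\rangle.\end{aligned}$$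
   Context: For sequences: $D_+(a)_j=(a_{j+1}-a_j)/\Delta x$, $D_-(a)_j=(a_j-a_{j-1})/\Delta x$, $D=\frac12(D_++D_-)$; products, squares and absolute values are componentwise; $\mathbf 1=(1,1,\dots)$; $\langle a,b\rangle=\Delta x\sum_ja_jb_j$, $\|a\|_{\ell^2_\Delta}=\langle a,a\rangle^{1/2}$, $\|a\|_{\ell^\infty}=\sup_j|a_j|$. *)

From Stdlib Require Import Reals Lra ZArith.
From Coquelicot Require Import Coquelicot.
Open Scope R_scope.

Definition Dp (dx : R) (a : Z -> R) (j : Z) : R := (a (j + 1)%Z - a j) / dx.
Definition Dm (dx : R) (a : Z -> R) (j : Z) : R := (a j - a (j - 1)%Z) / dx.
Definition Dc (dx : R) (a : Z -> R) (j : Z) : R := (Dp dx a j + Dm dx a j) / 2.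

(* Sum over Z, as a series over nat pairing j = n and j = -n-1. *)
Definition zsum (f : Z -> R) : R :=
  Series (fun n : nat => f (Z.of_nat n) + f (- Z.of_nat n - 1)%Z).

Definition ip (dx : R) (a b : Z -> R) : R := dx * zsum (fun j => a j * b j).
Definition l2norm (dx : R) (a : Z -> R) : R := sqrt (ip dx a a).

Definition linf (a : Z -> R) : R :=
  real (Lub_Rbar (fun x => exists j : Z, x = Rabs (a j))).

Definition in_l2 (a : Z -> R) : Prop :=
  ex_series (fun n : nat => a (Z.of_nat n) ^ 2 + a (- Z.of_nat n - 1)%Z ^ 2).

Definition bounded_seq (a : Z -> R) : Prop := exists M : R, forall j : Z, Rabs (a j) <= M.

From Stdlib Require Import Reals Lra ZArith Lia.
From Coquelicot Require Import Coquelicot.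
Open Scope R_scope.

(* Write X = D+D+D-(a), W = D+D-(a), U = D+D(a).  Expanding X_j D(ab)_j by the discrete
   product rule and summing by parts gives, pointwise,
     X D(ab) = -b U^2 - (dx/4) D-(b) W^2 - D-(b) W D+(a)_{j-1}
               + X (a_{j+1} D+(b) + a_{j-1} D-(b)) / 2 + (flux_{j+1} - flux_j).
   The two X-terms are bounded by Young's inequality with weight dt, and the middle term by
   Young's inequality after |D-(b)| <= ||D+(b)||_oo, split as a power sigma on W and 2 - sigma
   on D+(a).  The shifted terms |D+(b)_j| a_{j+1}^2, |D-(b)_j| a_{j-1}^2 and D+(a)_{j-1}^2 differ
   from their unshifted versions by telescoping differences, and the sum over Z of the
   difference of an absolutely summable sequence and its shift vanishes. *)

Definition zsummable (f : Z -> R) : Prop :=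
  ex_series (fun n : nat => Rabs (f (Z.of_nat n)))
  /\ ex_series (fun n : nat => Rabs (f (- Z.of_nat n - 1)%Z)).

Lemma ex_series_Rabs_le (u v : nat -> R) :
  (forall n, Rabs (u n) <= v n) -> ex_series v -> ex_series (fun n => Rabs (u n)).
Proof.
  intro Huv. apply (@ex_series_le R_AbsRing R_CompleteNormedModule).
  intro n. change (Rabs (Rabs (u n)) <= v n). rewrite Rabs_Rabsolu. apply Huv.
Qed.

Lemma zsummable_le_scal (f g : Z -> R) (M : R) :
  zsummable f -> (forall j, Rabs (g j) <= M * Rabs (f j)) -> zsummable g.
Proof.
  intros [Hp Hn] Hgf.
  split; eapply ex_series_Rabs_le;
    [| exact (ex_series_scal_l M _ Hp) | | exact (ex_series_scal_l M _ Hn)];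
    intro n; apply Hgf.
Qed.

Lemma zsummable_plus (f g : Z -> R) :
  zsummable f -> zsummable g -> zsummable (fun j => f j + g j).
Proof.
  intros [Hfp Hfn] [Hgp Hgn].
  split; eapply ex_series_Rabs_le;
    [| exact (ex_series_plus _ _ Hfp Hgp) | | exact (ex_series_plus _ _ Hfn Hgn)];
    intro n; apply Rabs_triang.
Qed.

Lemma zsummable_scal (c : R) (f : Z -> R) : zsummable f -> zsummable (fun j => c * f j).
Proof.
  intro Hf. apply (zsummable_le_scal f _ (Rabs c) Hf). intro j. rewrite Rabs_mult. lra.
Qed.

Lemma zsummable_minus (f g : Z -> R) :
  zsummable f -> zsummable g -> zsummable (fun j => f j - g j).
Proof.
  intros Hf Hg. apply (zsummable_le_scal (fun j => f j + -1 * g j) _ 1).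
  - apply zsummable_plus; [exact Hf | exact (zsummable_scal _ _ Hg)].
  - intro j. replace (f j + -1 * g j) with (f j - g j) by ring. lra.
Qed.

Lemma zsummable_shift_succ (f : Z -> R) : zsummable f -> zsummable (fun j => f (j + 1)%Z).
Proof.
  intros [Hp Hn]. split.
  - apply ex_series_incr_1 in Hp. refine (ex_series_ext _ _ _ Hp).
    intro n. now rewrite Nat2Z.inj_succ.
  - apply (ex_series_incr_1 (fun n : nat => Rabs (f (- Z.of_nat n - 1 + 1)%Z))).
    refine (ex_series_ext _ _ _ Hn). intro n. f_equal. f_equal. lia.
Qed.

Lemma zsummable_shift_pred (f : Z -> R) : zsummable f -> zsummable (fun j => f (j - 1)%Z).
Proof.
  intros [Hp Hn]. split.
  - apply (ex_series_incr_1 (fun n : nat => Rabs (f (Z.of_nat n - 1)%Z))).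
    refine (ex_series_ext _ _ _ Hp). intro n. f_equal. f_equal. lia.
  - apply ex_series_incr_1 in Hn. refine (ex_series_ext _ _ _ Hn).
    intro n. f_equal. f_equal. lia.
Qed.

Lemma zsummable_ex_series (f : Z -> R) :
  zsummable f -> ex_series (fun n : nat => f (Z.of_nat n) + f (- Z.of_nat n - 1)%Z).
Proof.
  intros [Hp Hn]. exact (ex_series_plus _ _ (ex_series_Rabs _ Hp) (ex_series_Rabs _ Hn)).
Qed.

Lemma zsum_split (f : Z -> R) : zsummable f ->
  zsum f = Series (fun n : nat => f (Z.of_nat n)) + Series (fun n : nat => f (- Z.of_nat n - 1)%Z).
Proof.
  intros [Hp Hn]. apply Series_plus; apply ex_series_Rabs; assumption.
Qed.

Lemma zsum_plus (f g : Z -> R) : zsummable f -> zsummable g ->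
  zsum (fun j => f j + g j) = zsum f + zsum g.
Proof.
  intros Hf Hg. unfold zsum. rewrite <- Series_plus by (apply zsummable_ex_series; assumption).
  apply Series_ext. intro n. ring.
Qed.

Lemma zsum_minus (f g : Z -> R) : zsummable f -> zsummable g ->
  zsum (fun j => f j - g j) = zsum f - zsum g.
Proof.
  intros Hf Hg. unfold zsum. rewrite <- Series_minus by (apply zsummable_ex_series; assumption).
  apply Series_ext. intro n. ring.
Qed.

Lemma zsum_scal (c : R) (f : Z -> R) : zsum (fun j => c * f j) = c * zsum f.
Proof. unfold zsum. rewrite <- Series_scal_l. apply Series_ext. intro n. ring. Qed.

Lemma Series_nonneg (u : nat -> R) : ex_series u -> (forall n, 0 <= u n) -> 0 <= Series u.
Proof.
  intros Hu Hpos. replace 0 with (Series (fun n => 0 * u n)).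
  - apply Series_le; [intro n; specialize (Hpos n); lra | exact Hu].
  - rewrite Series_scal_l. ring.
Qed.

Lemma zsum_nonneg (f : Z -> R) : zsummable f -> (forall j, 0 <= f j) -> 0 <= zsum f.
Proof.
  intros Hf Hpos. apply Series_nonneg; [exact (zsummable_ex_series _ Hf) |].
  intro n. pose proof (Hpos (Z.of_nat n)). pose proof (Hpos (- Z.of_nat n - 1)%Z). lra.
Qed.

Lemma zsum_le (f g : Z -> R) : zsummable f -> zsummable g ->
  (forall j, f j <= g j) -> zsum f <= zsum g.
Proof.
  intros Hf Hg Hfg. apply Rminus_le_0. rewrite <- zsum_minus by assumption.
  apply zsum_nonneg; [apply zsummable_minus; assumption | intro j; specialize (Hfg j); lra].
Qed.

Lemma zsum_shift_succ (f : Z -> R) : zsummable f -> zsum (fun j => f (j + 1)%Z) = zsum f.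
Proof.
  intro Hf. pose proof (zsummable_shift_succ f Hf) as Hf1.
  rewrite (zsum_split _ Hf), (zsum_split _ Hf1).
  destruct Hf as [Hp Hn]. destruct Hf1 as [Hp1 Hn1].
  rewrite (Series_incr_1 (fun n : nat => f (Z.of_nat n))) by (apply ex_series_Rabs; exact Hp).
  rewrite (Series_incr_1 (fun n : nat => f (- Z.of_nat n - 1 + 1)%Z))
    by (apply ex_series_Rabs; exact Hn1).
  rewrite (Series_ext (fun k : nat => f (Z.of_nat (S k))) (fun n : nat => f (Z.of_nat n + 1)%Z))
    by (intro n; now rewrite Nat2Z.inj_succ).
  rewrite (Series_ext (fun k : nat => f (- Z.of_nat (S k) - 1 + 1)%Z)
                      (fun n : nat => f (- Z.of_nat n - 1)%Z))
    by (intro n; f_equal; lia).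
  replace (- Z.of_nat 0 - 1 + 1)%Z with (Z.of_nat 0) by reflexivity.
  ring.
Qed.

Lemma zsum_le_telescoping (f g h : Z -> R) :
  zsummable f -> zsummable g -> zsummable h ->
  (forall j, f j <= g j + (h (j + 1)%Z - h j)) -> zsum f <= zsum g.
Proof.
  intros Hf Hg Hh Hfgh.
  assert (Hdh : zsummable (fun j => h (j + 1)%Z - h j))
    by exact (zsummable_minus _ _ (zsummable_shift_succ _ Hh) Hh).
  apply Rle_trans with (zsum (fun j => g j + (h (j + 1)%Z - h j))).
  - apply zsum_le; [exact Hf | exact (zsummable_plus _ _ Hg Hdh) | exact Hfgh].
  - rewrite zsum_plus, zsum_minus, zsum_shift_succ by (try apply zsummable_shift_succ; assumption).
    lra.
Qed.

Lemma bounded_seq_const (c : R) : bounded_seq (fun _ => c).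
Proof. exists (Rabs c). intro j. lra. Qed.

Lemma bounded_seq_abs (f : Z -> R) : bounded_seq f -> bounded_seq (fun j => Rabs (f j)).
Proof. intros [M HM]. exists M. intro j. rewrite Rabs_Rabsolu. apply HM. Qed.

Lemma bounded_seq_plus (f g : Z -> R) :
  bounded_seq f -> bounded_seq g -> bounded_seq (fun j => f j + g j).
Proof.
  intros [M HM] [N HN]. exists (M + N). intro j.
  pose proof (Rabs_triang (f j) (g j)). pose proof (HM j). pose proof (HN j). lra.
Qed.

Lemma bounded_seq_scal (c : R) (f : Z -> R) : bounded_seq f -> bounded_seq (fun j => c * f j).
Proof.
  intros [M HM]. exists (Rabs c * M). intro j. rewrite Rabs_mult.
  apply Rmult_le_compat_l; [apply Rabs_pos | apply HM].
Qed.

Lemma bounded_seq_minus (f g : Z -> R) :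
  bounded_seq f -> bounded_seq g -> bounded_seq (fun j => f j - g j).
Proof.
  intros Hf Hg. destruct (bounded_seq_plus _ _ Hf (bounded_seq_scal (-1) _ Hg)) as [M HM].
  exists M. intro j. replace (f j - g j) with (f j + -1 * g j) by ring. apply HM.
Qed.

Lemma bounded_seq_shift_pred (f : Z -> R) : bounded_seq f -> bounded_seq (fun j => f (j - 1)%Z).
Proof. intros [M HM]. exists M. intro j. apply HM. Qed.

Lemma Dm_eq_Dp_pred (dx : R) (f : Z -> R) (j : Z) : Dm dx f j = Dp dx f (j - 1)%Z.
Proof. unfold Dm, Dp. now rewrite Z.sub_add. Qed.

Lemma Dm_succ (dx : R) (f : Z -> R) (j : Z) : Dm dx f (j + 1)%Z = Dp dx f j.
Proof. unfold Dm, Dp. now rewrite Z.add_simpl_r. Qed.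

Lemma bounded_seq_Dm (dx : R) (f : Z -> R) : bounded_seq (Dp dx f) -> bounded_seq (Dm dx f).
Proof.
  intro Hf. destruct (bounded_seq_shift_pred _ Hf) as [M HM].
  exists M. intro j. rewrite Dm_eq_Dp_pred. apply HM.
Qed.

Lemma zsummable_bounded_mul (c f : Z -> R) :
  bounded_seq c -> zsummable f -> zsummable (fun j => c j * f j).
Proof.
  intros [M HM] Hf. apply (zsummable_le_scal f _ M Hf). intro j. rewrite Rabs_mult.
  apply Rmult_le_compat_r; [apply Rabs_pos | apply HM].
Qed.

Lemma Rabs_le_linf (f : Z -> R) (j : Z) : bounded_seq f -> Rabs (f j) <= linf f.
Proof.
  intros [M HM]. unfold linf.
  set (E := fun x => exists k : Z, x = Rabs (f k)).
  destruct (Lub_Rbar_correct E) as [Hub Hlub].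
  assert (Hj : Rbar_le (Rabs (f j)) (Lub_Rbar E)) by (apply Hub; exists j; reflexivity).
  assert (HE : Rbar_le (Lub_Rbar E) M) by (apply Hlub; intros x [k ->]; apply HM).
  destruct (Lub_Rbar E); simpl in *; tauto.
Qed.

Definition zl2 (f : Z -> R) : Prop := zsummable (fun j => f j ^ 2).

Lemma zl2_of_in_l2 (f : Z -> R) : in_l2 f -> zl2 f.
Proof.
  intro Hf. split; (eapply ex_series_Rabs_le; [| exact Hf]); intro n;
    rewrite !Rabs_right by (apply Rle_ge, pow2_ge_0);
    pose proof (pow2_ge_0 (f (Z.of_nat n))); pose proof (pow2_ge_0 (f (- Z.of_nat n - 1)%Z)); lra.
Qed.

Lemma zsummable_mul (f g : Z -> R) : zl2 f -> zl2 g -> zsummable (fun j => f j * g j).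
Proof.
  intros Hf Hg. apply (zsummable_le_scal _ _ 1 (zsummable_plus _ _ Hf Hg)). intro j.
  rewrite Rmult_1_l, Rabs_mult, (Rabs_right (_ + _)) by (apply Rle_ge; nra).
  rewrite <- (pow2_abs (f j)), <- (pow2_abs (g j)).
  pose proof (pow2_ge_0 (Rabs (f j) - Rabs (g j))). nra.
Qed.

Lemma zl2_plus (f g : Z -> R) : zl2 f -> zl2 g -> zl2 (fun j => f j + g j).
Proof.
  intros Hf Hg. apply (zsummable_le_scal _ _ 2 (zsummable_plus _ _ Hf Hg)). intro j.
  pose proof (pow2_ge_0 (f j)). pose proof (pow2_ge_0 (g j)).
  pose proof (pow2_ge_0 (f j + g j)). pose proof (pow2_ge_0 (f j - g j)).
  assert (2 * (f j ^ 2 + g j ^ 2) - (f j + g j) ^ 2 = (f j - g j) ^ 2) by ring.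
  rewrite !Rabs_right by (apply Rle_ge; lra). lra.
Qed.

Lemma zl2_scal (c : R) (f : Z -> R) : zl2 f -> zl2 (fun j => c * f j).
Proof.
  intro Hf. apply (zsummable_le_scal _ _ (c ^ 2) Hf). intro j.
  rewrite Rpow_mult_distr, Rabs_mult, (Rabs_right (c ^ 2)) by (apply Rle_ge, pow2_ge_0). lra.
Qed.

Lemma zl2_bounded_mul (c f : Z -> R) : bounded_seq c -> zl2 f -> zl2 (fun j => c j * f j).
Proof.
  intros [M HM] Hf. apply (zsummable_le_scal _ _ (M ^ 2) Hf). intro j.
  rewrite Rpow_mult_distr, Rabs_mult, <- RPow_abs.
  apply Rmult_le_compat_r; [apply Rabs_pos |].
  pose proof (HM j). pose proof (Rabs_pos (c j)). nra.
Qed.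

Lemma zl2_mul_bounded (f c : Z -> R) : zl2 f -> bounded_seq c -> zl2 (fun j => f j * c j).
Proof.
  intros Hf Hc. apply (zsummable_le_scal _ _ 1 (zl2_bounded_mul c f Hc Hf)). intro j.
  rewrite Rmult_comm. lra.
Qed.

Lemma zl2_shift_succ (f : Z -> R) : zl2 f -> zl2 (fun j => f (j + 1)%Z).
Proof. exact (zsummable_shift_succ _). Qed.

Lemma zl2_shift_pred (f : Z -> R) : zl2 f -> zl2 (fun j => f (j - 1)%Z).
Proof. exact (zsummable_shift_pred _). Qed.

Lemma zl2_ext (f g : Z -> R) : zl2 f -> (forall j, g j = f j) -> zl2 g.
Proof. intros Hf Hgf. apply (zsummable_le_scal _ _ 1 Hf). intro j. rewrite Hgf. lra. Qed.

Lemma zl2_Dp (dx : R) (f : Z -> R) : zl2 f -> zl2 (Dp dx f).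
Proof.
  intro Hf. apply (zl2_ext (fun j => / dx * f (j + 1)%Z + - / dx * f j)).
  - apply zl2_plus; apply zl2_scal; [apply zl2_shift_succ |]; exact Hf.
  - intro j. unfold Dp, Rdiv. ring.
Qed.

Lemma zl2_Dm (dx : R) (f : Z -> R) : zl2 f -> zl2 (Dm dx f).
Proof.
  intro Hf. apply (zl2_ext (fun j => / dx * f j + - / dx * f (j - 1)%Z)).
  - apply zl2_plus; apply zl2_scal; [| apply zl2_shift_pred]; exact Hf.
  - intro j. unfold Dm, Rdiv. ring.
Qed.

Lemma zl2_Dc (dx : R) (f : Z -> R) : zl2 f -> zl2 (Dc dx f).
Proof.
  intro Hf. apply (zl2_ext (fun j => / 2 * Dp dx f j + / 2 * Dm dx f j)).
  - apply zl2_plus; apply zl2_scal; [apply zl2_Dp | apply zl2_Dm]; exact Hf.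
  - intro j. unfold Dc, Rdiv. ring.
Qed.

Lemma zsummable_sq (f : Z -> R) : zl2 f -> zsummable (fun j => f j ^ 2).
Proof. exact (fun Hf => Hf). Qed.

Create HintDb zsummable discriminated.
#[local] Hint Resolve zsummable_plus zsummable_minus zsummable_scal zsummable_bounded_mul
  zsummable_mul zsummable_sq zl2_scal zl2_bounded_mul zl2_mul_bounded zl2_shift_pred
  zl2_Dp zl2_Dm zl2_Dc bounded_seq_const bounded_seq_abs bounded_seq_plus bounded_seq_minus
  bounded_seq_scal bounded_seq_shift_pred bounded_seq_Dm : zsummable.

(* The summation-by-parts boundary term, written as a combination of products so that the
   [zsummable] hints apply to it. *)
Definition flux (dx : R) (a b : Z -> R) (j : Z) : R :=
  / dx * (Dp dx (Dm dx a) j * (b (j - 1)%Z * Dc dx a (j - 1)%Z))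
  - / 4 * (b (j - 1)%Z * Dp dx (Dm dx a) (j - 1)%Z ^ 2)
  + b (j - 1)%Z * Dp dx (Dc dx a) (j - 1)%Z ^ 2.

Lemma Dp3_Dc_mul_identity (dx : R) (a b : Z -> R) (j : Z) : dx <> 0 ->
  Dp dx (Dp dx (Dm dx a)) j * Dc dx (fun i => a i * b i) j =
  - (b j * Dp dx (Dc dx a) j ^ 2) - dx / 4 * Dm dx b j * Dp dx (Dm dx a) j ^ 2
  - Dm dx b j * Dp dx (Dm dx a) j * Dp dx a (j - 1)%Z
  + 1 / 2 * Dp dx (Dp dx (Dm dx a)) j * (a (j + 1)%Z * Dp dx b j + a (j - 1)%Z * Dm dx b j)
  + (flux dx a b (j + 1)%Z - flux dx a b j).
Proof.
  intro Hdx. unfold flux, Dc, Dp, Dm.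
  rewrite ?Z.add_simpl_r, ?Z.sub_add. field. exact Hdx.
Qed.

Lemma young_weighted (e p x y : R) : 0 < e ->
  1 / 2 * x * (y * p) <= e / 4 * Rabs p * x ^ 2 + 1 / (4 * e) * Rabs p * y ^ 2.
Proof.
  intro He.
  assert (Hxyp : x * (y * p) <= Rabs p * (Rabs x * Rabs y)).
  { rewrite <- !Rabs_mult. eapply Rle_trans; [apply Rle_abs |]. right. f_equal. ring. }
  assert (Hxy : 2 * (Rabs x * Rabs y) <= e * x ^ 2 + / e * y ^ 2).
  { rewrite <- (pow2_abs x), <- (pow2_abs y).
    assert (E : e * Rabs x ^ 2 + / e * Rabs y ^ 2 - 2 * (Rabs x * Rabs y)
                = / e * (e * Rabs x - Rabs y) ^ 2) by (field; lra).
    pose proof (pow2_ge_0 (e * Rabs x - Rabs y)).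
    assert (0 < / e) by (apply Rinv_0_lt_compat; lra). nra. }
  assert (E : e / 4 * Rabs p * x ^ 2 + 1 / (4 * e) * Rabs p * y ^ 2
              = Rabs p / 4 * (e * x ^ 2 + / e * y ^ 2)) by (field; lra).
  rewrite E. pose proof (Rabs_pos p). nra.
Qed.

Lemma young_pow_split (L m w d : R) (s : nat) : Rabs m <= L -> (s = 0 \/ s = 1)%nat ->
  m * w * d <= 1 / 2 * L ^ s * w ^ 2 + 1 / 2 * L ^ (2 - s) * d ^ 2.
Proof.
  intros HmL Hs.
  assert (Hmwd : m * w * d <= L * (Rabs w * Rabs d)).
  { eapply Rle_trans; [apply Rle_abs |]. rewrite !Rabs_mult, Rmult_assoc.
    apply Rmult_le_compat_r; [apply Rmult_le_pos; apply Rabs_pos | exact HmL]. }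
  pose proof (Rabs_pos w). pose proof (Rabs_pos d). pose proof (Rabs_pos m).
  rewrite <- (pow2_abs w), <- (pow2_abs d).
  destruct Hs as [-> | ->]; simpl.
  - pose proof (pow2_ge_0 (Rabs w - L * Rabs d)). nra.
  - pose proof (pow2_ge_0 (Rabs w - Rabs d)). nra.
Qed.

Section DensityBound.

Variables (dx dt L : R) (a b : Z -> R) (sigma : nat).
Hypotheses (Hdx : dx <> 0) (Hdt : 0 < dt) (HL : forall j, Rabs (Dp dx b j) <= L)
  (Hsigma : sigma = 0%nat \/ sigma = 1%nat).

Definition rhs_density (j : Z) : R :=
  dt / 4 * ((Rabs (Dp dx b j) + Rabs (Dm dx b j)) * Dp dx (Dp dx (Dm dx a)) j ^ 2)
  + 1 / (4 * dt) * ((Rabs (Dm dx b j) + Rabs (Dp dx b j)) * a j ^ 2)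
  + 1 / 2 * ((L ^ sigma - dx / 2 * Dm dx b j) * Dp dx (Dm dx a) j ^ 2)
  + 1 / 2 * L ^ (2 - sigma) * (Dp dx a j * Dp dx a j)
  - b j * Dp dx (Dc dx a) j ^ 2.

(* Absorbs the index shifts of the Young terms, so that only telescoping differences remain. *)
Definition total_flux (j : Z) : R :=
  flux dx a b j
  + 1 / (4 * dt) * (Rabs (Dm dx b j) * a j ^ 2)
  - 1 / (4 * dt) * (Rabs (Dp dx b (j - 1)%Z) * a (j - 1)%Z ^ 2)
  - 1 / 2 * L ^ (2 - sigma) * Dp dx a (j - 1)%Z ^ 2.

Lemma density_bound (j : Z) :
  Dp dx (Dp dx (Dm dx a)) j * Dc dx (fun i => a i * b i) j
  <= rhs_density j + (total_flux (j + 1)%Z - total_flux j).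
Proof.
  unfold rhs_density, total_flux. rewrite Dp3_Dc_mul_identity by exact Hdx.
  rewrite Z.add_simpl_r, Dm_succ, <- (Dm_eq_Dp_pred dx b j).
  assert (HLm : Rabs (- Dm dx b j) <= L) by (rewrite Rabs_Ropp, Dm_eq_Dp_pred; apply HL).
  pose proof (young_weighted dt (Dp dx b j) (Dp dx (Dp dx (Dm dx a)) j) (a (j + 1)%Z) Hdt).
  pose proof (young_weighted dt (Dm dx b j) (Dp dx (Dp dx (Dm dx a)) j) (a (j - 1)%Z) Hdt).
  pose proof (young_pow_split L _ (Dp dx (Dm dx a) j) (Dp dx a (j - 1)%Z) sigma HLm Hsigma).
  lra.
Qed.

End DensityBound.

Theorem lemma9 (dx dt : R) (a b : Z -> R) (sigma : nat) :
  0 < dx -> 0 < dt ->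
  in_l2 a -> in_l2 b ->
  bounded_seq b -> bounded_seq (Dp dx b) ->
  (sigma = 0%nat \/ sigma = 1%nat) ->
  ip dx (Dp dx (Dp dx (Dm dx a))) (Dc dx (fun j => a j * b j))
  <= dt / 4 * ip dx (fun j => Rabs (Dp dx b j) + Rabs (Dm dx b j))
                    (fun j => (Dp dx (Dp dx (Dm dx a)) j) ^ 2)
     + 1 / (4 * dt) * ip dx (fun j => Rabs (Dm dx b j) + Rabs (Dp dx b j))
                    (fun j => a j ^ 2)
     + 1 / 2 * ip dx (fun j => linf (Dp dx b) ^ sigma - dx / 2 * Dm dx b j)
                    (fun j => (Dp dx (Dm dx a) j) ^ 2)
     + 1 / 2 * linf (Dp dx b) ^ (2 - sigma) * l2norm dx (Dp dx a) ^ 2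
     - ip dx b (fun j => (Dp dx (Dc dx a) j) ^ 2).
Proof.
  (* b enters only through its boundedness and that of D+(b). *)
  intros Hdx Hdt Ha _ Hb HDb Hsigma.
  set (L := linf (Dp dx b)).
  pose proof (zl2_of_in_l2 a Ha) as Ha2.
  assert (HL : forall j, Rabs (Dp dx b j) <= L) by (intro j; exact (Rabs_le_linf _ j HDb)).
  assert (Hsum : zsum (fun j => Dp dx (Dp dx (Dm dx a)) j * Dc dx (fun i => a i * b i) j)
                 <= zsum (rhs_density dx dt L a b sigma)).
  { apply (zsum_le_telescoping _ _ (total_flux dx dt L a b sigma)).
    4: exact (density_bound dx dt L a b sigma ltac:(lra) Hdt HL Hsigma).
    all: unfold rhs_density, total_flux, flux; auto 14 with zsummable. }
  unfold rhs_density in Hsum.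
  rewrite zsum_minus, !zsum_plus, !zsum_scal in Hsum by auto 14 with zsummable.
  unfold l2norm, ip.
  rewrite pow2_sqrt by (apply Rmult_le_pos;
    [lra | apply zsum_nonneg; [auto with zsummable | intro; apply Rle_0_sqr]]).
  apply (Rmult_le_compat_l dx) in Hsum; lra.
Qed.
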